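(* Let $G=(V,E)$ be a finite simple graph and let $\mathcal{F}$ be a (possibly empty) collection of minimal forts of $G$. Consider the integer program $\mathrm{MFF}(G,\mathcal{F})$: $$\text{minimize }\sum_{v\in V}x_v\ \text{ subject to }\ \sum_{v\in V}x_v\geq1,\quad x_u-x_v+\sum_{w\in N(u)\setminus\{v\}}x_w\geq0\ \ \forall v\in V,\ u\in N(v),\quad \sum_{v\in F}x_v\leq|F|-1\ \ \forall F\in\mathcal{F},\quad x\in\{0,1\}^V.$$ Suppose $\mathrm{MFF}(G,\mathcal{F})$ is feasible, let $x$ be an optimal solution, and let $F'=\{v\in V\colon x_v=1\}$. Then $\mathcal{F}\cup\{F'\}$ is a collection of minimal forts of $G$.
   Context: $N(u)$ denotes the neighborhood of $u$. A fort of $G$ is a non-empty set $F\subseteq V$ such that no vertex $u\in V\setminus F$ has exactly one neighbor in $F$. A fort is minimal if no fort of $G$ is a proper subset of it. *)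

From mathcomp Require Import all_boot all_order.
Set Implicit Arguments. Unset Strict Implicit. Unset Printing Implicit Defensive.

Definition simple_graph (T : finType) (e : rel T) : Prop :=
  symmetric e /\ irreflexive e.

Definition nbhd (T : finType) (e : rel T) (u : T) : {set T} := [set w | e u w].

Definition is_fort (T : finType) (e : rel T) (F : {set T}) : Prop :=
  F != set0 /\ forall u, u \notin F -> #|nbhd e u :&: F| != 1.

Definition is_minimal_fort (T : finType) (e : rel T) (F : {set T}) : Prop :=
  is_fort e F /\ forall F' : {set T}, F' \proper F -> ~ is_fort e F'.

(* Feasibility of a 0/1 vector x for MFF(G, FF).  The constraint
   x_u - x_v + sum_{w in N(u)\{v}} x_w >= 0 is written over nat as
   x_v <= x_u + sum_{w in N(u)\{v}} x_w. *)
Definition MFF_feasible (T : finType) (e : rel T) (FF : {set {set T}})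
  (x : {ffun T -> bool}) : Prop :=
  [/\ 1 <= \sum_(v : T) nat_of_bool (x v),
      forall v u, e v u ->
        nat_of_bool (x v) <= nat_of_bool (x u) + \sum_(w in nbhd e u :\ v) nat_of_bool (x w)
    & forall F, F \in FF -> \sum_(v in F) nat_of_bool (x v) <= #|F| - 1].

Definition MFF_optimal (T : finType) (e : rel T) (FF : {set {set T}})
  (x : {ffun T -> bool}) : Prop :=
  MFF_feasible e FF x /\
  forall y, MFF_feasible e FF y ->
    \sum_(v : T) nat_of_bool (x v) <= \sum_(v : T) nat_of_bool (y v).

From mathcomp Require Import all_boot all_order.
From mathcomp Require Import zify.
Set Implicit Arguments. Unset Strict Implicit. Unset Printing Implicit Defensive.

(* Feasibility of the
   indicator of S means exactly that S is a fort containing no member of FF: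
   the constraint for an edge (v, u) with v in S and u outside S says that u has
   a neighbor in S other than v, and the constraint for F in FF says that F is
   not inside S.  An optimal S is therefore a fort; a proper subfort of S would
   still contain no member of FF, hence be feasible with a smaller objective. *)

Definition indicator (T : finType) (S : {set T}) : {ffun T -> bool} :=
  [ffun v => v \in S].

Section Indicator.

Variable T : finType.
Implicit Types A F S : {set T}.

Lemma indicator_setK (x : {ffun T -> bool}) : indicator [set v | x v] = x.
Proof. by apply/ffunP => v; rewrite ffunE inE. Qed.

Lemma sum_indicator A S :
  \sum_(w in A) nat_of_bool (indicator S w) = #|A :&: S|.
Proof.
rewrite (eq_bigr (fun w => if w \in S then 1 else 0)); last first.
  by move=> w _; rewrite ffunE; case: (w \in S).
by rewrite -big_mkcondr sum1_card; apply: eq_card => w; rewrite !inE.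
Qed.

Lemma sum_indicatorT S : \sum_(w : T) nat_of_bool (indicator S w) = #|S|.
Proof.
rewrite -[in RHS](setTI S) -sum_indicator.
by apply: eq_bigl => w; rewrite inE.
Qed.

Lemma card_setI_ltE F S :
  F != set0 -> (#|F :&: S| <= #|F| - 1) = ~~ (F \subset S).
Proof.
rewrite -card_gt0 => F_gt0.
have [le_FS_F eq_FS_F] := subset_leqif_cards (subsetIl F S).
have {}eq_FS_F : (#|F :&: S| == #|F|) = (F \subset S).
  by rewrite eq_FS_F; apply/eqP/setIidPl.
by rewrite -eq_FS_F; apply/idP/idP; lia.
Qed.

Variable e : rel T.
Hypothesis e_sym : symmetric e.

Lemma nbhd_constraints_fortE S :
  (forall v u, e v u ->
     nat_of_bool (indicator S v)
       <= nat_of_bool (indicator S u)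
          + \sum_(w in nbhd e u :\ v) nat_of_bool (indicator S w))
  <-> forall u, u \notin S -> #|nbhd e u :&: S| != 1.
Proof.
have cardD1_nbhd v u : e v u -> v \in S ->
    #|(nbhd e u :\ v) :&: S| = #|nbhd e u :&: S| - 1.
  move=> evu vS; rewrite setIDAC (cardsD1 v (nbhd e u :&: S)).
  by rewrite !inE e_sym evu vS addKn.
split=> [constraint u uS | not_one v u evu].
  apply/negP => /cards1P[v NuS_v].
  have /setIP[] : v \in nbhd e u :&: S by rewrite NuS_v set11.
  rewrite inE e_sym => evu vS.
  have := constraint v u evu; rewrite !ffunE vS (negbTE uS) sum_indicator.
  by rewrite cardD1_nbhd // NuS_v cards1.
rewrite !ffunE sum_indicator; case vS: (v \in S) => //.
case uS: (u \in S) => //; rewrite cardD1_nbhd //=.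
have : 0 < #|nbhd e u :&: S|.
  by apply/card_gt0P; exists v; rewrite !inE e_sym evu vS.
by have := not_one u (negbT uS); lia.
Qed.

Lemma MFF_feasible_indicatorE (FF : {set {set T}}) S :
  (forall F, F \in FF -> F != set0) ->
  MFF_feasible e FF (indicator S)
  <-> is_fort e S /\ forall F, F \in FF -> ~~ (F \subset S).
Proof.
move=> FF_neq0; rewrite /MFF_feasible /is_fort sum_indicatorT card_gt0.
rewrite -nbhd_constraints_fortE.
have FF_avoidE : (forall F, F \in FF ->
      \sum_(v in F) nat_of_bool (indicator S v) <= #|F| - 1)
    <-> forall F, F \in FF -> ~~ (F \subset S).
  by split=> FFS F FF_F; have := FFS F FF_F;
    rewrite sum_indicator card_setI_ltE ?FF_neq0.
rewrite -FF_avoidE; split; first by case.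
by case=> -[]; split.
Qed.

End Indicator.

Theorem theorem6p2 (T : finType) (e : rel T) (FF : {set {set T}})
  (x : {ffun T -> bool}) :
  simple_graph e ->
  (forall F, F \in FF -> is_minimal_fort e F) ->
  MFF_optimal e FF x ->
  forall F, F \in FF :|: [set [set v | x v]] -> is_minimal_fort e F.
Proof.
move=> [e_sym _] FF_min [x_feas x_opt] F; rewrite !inE.
case/orP=> [/FF_min // | /eqP ->].
have FF_neq0 F' : F' \in FF -> F' != set0 by move=> /FF_min[[]].
set S := [set v | x v].
have x_indicator : x = indicator S by rewrite indicator_setK.
rewrite x_indicator in x_feas x_opt.
have [S_fort S_avoid] := (MFF_feasible_indicatorE e_sym S FF_neq0).1 x_feas.
split=> // F' ltF'S F'_fort.
have F'_feas : MFF_feasible e FF (indicator F').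
  apply/(MFF_feasible_indicatorE e_sym F' FF_neq0); split=> // G /S_avoid.
  by apply: contra => /subset_trans; apply; apply: proper_sub.
by have := x_opt _ F'_feas; rewrite !sum_indicatorT leqNgt proper_card.
Qed.
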